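(* Let $d \ge 1$ be an integer, let $X_0, X_1, \dots$ be independent random variables each taking the value $1$ with probability $1/4$ and $0$ with probability $3/4$, and let $$P_d = P\Big(\exists N > 0 : \sum_{k=0}^{N-1} X_k < \tfrac{N}{d}\Big).$$ If $d \le 4$ then $P_d = 1$. If $d > 4$ then the polynomial $g_d(z) = z^d - 4z + 3$ has exactly one root in the open unit disk, this root is real and lies in $(3/4,1)$, and $P_d$ equals this root. *)

From Stdlib Require Import Reals List.
Import ListNotations.
Open Scope R_scope.

Definition Cx : Type := (R * R)%type.
Definition Cadd (z w : Cx) : Cx := (fst z + fst w, snd z + snd w).
Definition Cmul (z w : Cx) : Cx :=
  (fst z * fst w - snd z * snd w, fst z * snd w + snd z * fst w).
Definition Cof (x : R) : Cx := (x, 0).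
Fixpoint Cpow (z : Cx) (n : nat) : Cx :=
  match n with O => Cof 1 | S m => Cmul z (Cpow z m) end.
Definition Cnorm2 (z : Cx) : R := fst z * fst z + snd z * snd z.

Definition g (d : nat) (z : Cx) : Cx :=
  Cadd (Cadd (Cpow z d) (Cmul (Cof (-4)) z)) (Cof 3).

(* ---------- The probability P_d ----------
   X_0, X_1, ... i.i.d. with P(X_k = 1) = 1/4, P(X_k = 0) = 3/4.
   A realisation of (X_0,...,X_{M-1}) is a list of booleans (true = 1). *)

Fixpoint all_seqs (M : nat) : list (list bool) :=
  match M with
  | O => [[]]
  | S m => map (cons true) (all_seqs m) ++ map (cons false) (all_seqs m)
  end.

Fixpoint weight (l : list bool) : R :=
  match l with
  | [] => 1
  | b :: t => (if b then 1/4 else 3/4) * weight t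
  end.

Definition partial_sum (l : list bool) (N : nat) : nat :=
  count_occ Bool.bool_dec (firstn N l) true.

Definition event_upto (d : nat) (l : list bool) : bool :=
  existsb (fun N => if Rlt_dec (INR (partial_sum l N)) (INR N / INR d)
                    then true else false)
          (seq 1 (length l)).

Definition P_upto (d M : nat) : R :=
  fold_right Rplus 0
    (map (fun l => if event_upto d l then weight l else 0) (all_seqs M)).

(* P_d = P(exists N > 0, ...) = lim_{M -> oo} P_upto d M
   (continuity from below of the product measure). We phrase
   "P_d = p" as convergence of P_upto d to p. *)
Definition P_d_is (d : nat) (p : R) : Prop := Un_cv (P_upto d) p.

(* Encode the partial sums by the walk a + d (X_0 + ... + X_{N-1}) - N started at a credit a:
   it moves up by d - 1 with probability 1/4 and down by 1 with probability 3/4, and P_d is the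
   probability that, started at 0, it ever reaches -1.  The probabilities f_M(a) of reaching -1
   within M steps satisfy f_{M+1}(a) = f_M(a + d - 1)/4 + 3 f_M(a - 1)/4, with f(-1) = 1.

   For d > 4 let r be the root of g_d in (0, 1), i.e. 1 + r + ... + r^(d-1) = 4.  Since
   r^d + 3 = 4r, a |-> r^(a+1) is a fixed point of the recurrence, so f_M(a) <= r^(a+1); for
   r < rho < 1 one step reproduces the error term rho^(a+1) phi^M, phi = (rho^d + 3)/(4 rho) < 1,
   so f_M(a) >= r^(a+1) - rho^(a+1) phi^M, and f_M(0) -> r.  A root z of g_d in the unit disk
   satisfies 4|z| <= |z|^d + 3, hence |z| <= r, and then 4|z - r| = |z^d - r^d|
   <= d r^(d-1) |z - r| with d r^(d-1) < 4 forces z = r.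

   For d = 4 the limits L(a) of f_M(a) give a bounded solution G(n) = 1 - L(n - 1) of
   G(n+4) = 4 G(n+1) - 3 G(n), whose characteristic polynomial (x - 1)^2 (x^2 + 2x + 3) has no
   other root in the closed unit disk; so G is constant, G = G(0) = 0 and P_4 = 1.  For d < 4
   ruin is only more likely. *)

From Pilot Require Import Defs.
From Stdlib Require Import Reals Lra Lia List.
From Coquelicot Require Import Coquelicot.
Import ListNotations.
Open Scope R_scope.

Fixpoint geom_sum (n : nat) (x : R) : R :=
  match n with O => 0 | S m => 1 + x * geom_sum m x end.

Lemma pow_sub_1_geom_sum n x : x ^ n - 1 = (x - 1) * geom_sum n x.
Proof.
  induction n as [|n IH]; simpl; [ring|].
  replace (x * x ^ n - 1) with (x * (x ^ n - 1) + (x - 1)) by ring.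
  rewrite IH; ring.
Qed.

Lemma continuity_geom_sum n : continuity (geom_sum n).
Proof.
  induction n as [|n IH]; simpl.
  - apply continuity_const; now intros.
  - change (continuity ((fun _ => 1) + id * geom_sum n)%F).
    apply continuity_plus; [apply continuity_const; now intros|].
    apply continuity_mult; [apply derivable_continuous, derivable_id | exact IH].
Qed.

Lemma geom_sum_1 n : geom_sum n 1 = INR n.
Proof. induction n as [|n IH]; simpl geom_sum; [reflexivity|]. rewrite IH, S_INR; ring. Qed.

Lemma geom_sum_nonneg n x : 0 <= x -> 0 <= geom_sum n x.
Proof. intros hx; induction n; simpl; nra. Qed.

Lemma geom_sum_le_compat n x y : 0 <= x <= y -> geom_sum n x <= geom_sum n y.
Proof.
  intros hxy; induction n as [|n IH]; simpl; [lra|].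
  pose proof (geom_sum_nonneg n x (proj1 hxy)); nra.
Qed.

Lemma geom_sum_lt_compat n x y :
  0 <= x < y -> geom_sum (S (S n)) x < geom_sum (S (S n)) y.
Proof.
  intros hxy; change (1 + x * (1 + x * geom_sum n x) < 1 + y * (1 + y * geom_sum n y)).
  pose proof (geom_sum_nonneg n x (proj1 hxy)).
  pose proof (geom_sum_le_compat n x y ltac:(lra)).
  assert (x * x * geom_sum n x <= y * y * geom_sum n y)
    by (apply Rmult_le_compat; nra).
  nra.
Qed.

Lemma geom_sum_gt_last n x :
  0 <= x < 1 -> INR (S (S n)) * x ^ S n < geom_sum (S (S n)) x.
Proof.
  intros hx; induction n as [|n IH]; [simpl; lra|].
  change (geom_sum (S (S (S n))) x) with (1 + x * geom_sum (S (S n)) x).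
  assert (x ^ S (S n) < 1) by (apply pow_lt_1_compat; [lra | lia]).
  rewrite S_INR; change (x ^ S (S n)) with (x * x ^ S n) in *; nra.
Qed.

Definition trinomial (d : nat) (x : R) : R := x ^ d - 4 * x + 3.

Lemma trinomial_factor d x : trinomial d x = (x - 1) * (geom_sum d x - 4).
Proof.
  unfold trinomial.
  replace (x ^ d - 4 * x + 3) with ((x ^ d - 1) - 4 * (x - 1)) by ring.
  rewrite pow_sub_1_geom_sum; ring.
Qed.

Lemma geom_sum_root_exists d :
  (4 < d)%nat -> exists r, 0 < r < 1 /\ geom_sum d r = 4.
Proof.
  intros hd; apply lt_INR in hd; simpl in hd.
  destruct (IVT (fun x => geom_sum d x - 4) 0 1) as [r [hr hroot]].
  - apply continuity_minus; [apply continuity_geom_sum | apply continuity_const; now intros].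
  - lra.
  - destruct d as [|[|d]]; simpl in hd |- *; lra.
  - rewrite geom_sum_1; lra.
  - exists r; split; [|lra].
    destruct (Req_dec r 0) as [->|]; [destruct d as [|[|d]]; simpl in hd, hroot; lra|].
    destruct (Req_dec r 1) as [->|]; [rewrite geom_sum_1 in hroot; lra | lra].
Qed.

Lemma Cpow_Coquelicot z n : Defs.Cpow z n = (z ^ n)%C.
Proof. induction n as [|n IH]; simpl; [reflexivity|]. now rewrite IH. Qed.

Lemma g_Coquelicot d z : g d z = (z ^ d - 4 * z + 3)%C.
Proof.
  unfold g; rewrite Cpow_Coquelicot.
  destruct (z ^ d)%C, z; unfold Cadd, Cmul, Cof, Cminus, Cplus, Copp, Cmult, RtoC; simpl.
  f_equal; ring.
Qed.

Lemma trinomial_RtoC d x : (RtoC x ^ d - 4 * RtoC x + 3)%C = RtoC (trinomial d x).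
Proof. unfold trinomial; now rewrite <- RtoC_pow, RtoC_plus, RtoC_minus, RtoC_mult. Qed.

Lemma Cmod_lt_1_of_Cnorm2 z : Cnorm2 z < 1 -> Cmod z < 1.
Proof.
  intros hz; unfold Cmod; rewrite <- sqrt_1; apply sqrt_lt_1_alt.
  unfold Cnorm2 in hz; simpl; nra.
Qed.

Lemma Cmod_pow_sub_le m (z w : C) rho :
  Cmod z <= rho -> Cmod w <= rho ->
  Cmod (z ^ S m - w ^ S m)%C <= INR (S m) * rho ^ m * Cmod (z - w)%C.
Proof.
  intros hz hw; induction m as [|m IH].
  - replace (z ^ 1 - w ^ 1)%C with (z - w)%C by ring; simpl; lra.
  - replace (z ^ S (S m) - w ^ S (S m))%C
      with (z * (z ^ S m - w ^ S m) + (z - w) * w ^ S m)%C by (simpl; ring).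
    eapply Rle_trans; [apply Cmod_triangle|].
    rewrite !Cmod_mult, Cmod_pow.
    pose proof (Cmod_ge_0 (z ^ S m - w ^ S m)%C).
    pose proof (Cmod_ge_0 (z - w)%C).
    assert (Cmod w ^ S m <= rho ^ S m) by (apply pow_incr; split; [apply Cmod_ge_0 | exact hw]).
    assert (Cmod z * Cmod (z ^ S m - w ^ S m)%C <= rho * (INR (S m) * rho ^ m * Cmod (z - w)%C))
      by (apply Rmult_le_compat; auto; apply Cmod_ge_0).
    rewrite (S_INR (S m)); simpl pow in *; nra.
Qed.

Section TrinomialRoot.

Variables (d : nat) (r : R).
Hypotheses (hd : (4 < d)%nat) (hr : 0 < r < 1) (hroot : geom_sum d r = 4).

Lemma trinomial_root : trinomial d r = 0.
Proof. rewrite trinomial_factor, hroot; ring. Qed.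

Lemma trinomial_root_gt_3_4 : 3 / 4 < r.
Proof.
  pose proof trinomial_root as h; unfold trinomial in h.
  pose proof (pow_lt r d (proj1 hr)); lra.
Qed.

Lemma trinomial_nonneg_le_root x : 0 <= x < 1 -> 0 <= trinomial d x -> x <= r.
Proof.
  intros hx hnn; rewrite trinomial_factor in hnn.
  destruct (Rle_lt_dec x r) as [|hlt]; [assumption|].
  destruct d as [|[|m]]; [lia | lia|].
  pose proof (geom_sum_lt_compat m r x ltac:(lra)); nra.
Qed.

Lemma trinomial_neg_above_root x : r < x < 1 -> trinomial d x < 0.
Proof.
  intros hx; destruct (Rlt_le_dec (trinomial d x) 0) as [|hnn]; [assumption|].
  pose proof (trinomial_nonneg_le_root x ltac:(lra) hnn); lra.
Qed.

Lemma trinomial_slope_at_root : INR d * r ^ (d - 1) < 4.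
Proof.
  destruct d as [|[|m]]; [lia | lia|].
  replace (S (S m) - 1)%nat with (S m) by lia.
  rewrite <- hroot; apply geom_sum_gt_last; lra.
Qed.

Lemma trinomial_disk_root_unique z :
  Cmod z < 1 -> (z ^ d - 4 * z + 3 = 0)%C -> z = RtoC r.
Proof.
  intros hz hgz.
  assert (hzr : Cmod z <= r).
  { apply trinomial_nonneg_le_root; [split; [apply Cmod_ge_0 | exact hz]|].
    unfold trinomial; rewrite <- Cmod_pow.
    replace (4 * Cmod z) with (Cmod (z ^ d + 3)%C).
    - pose proof (Cmod_triangle (z ^ d) 3) as htri.
      rewrite Cmod_R, Rabs_right in htri; lra.
    - replace (z ^ d + 3)%C with (4 * z)%C
        by (symmetry; apply Ceq_minus; rewrite <- hgz; ring).
      rewrite Cmod_mult, Cmod_R, Rabs_right; lra. }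
  assert (hdiff : (z ^ d - RtoC r ^ d = 4 * (z - RtoC r))%C).
  { transitivity ((z ^ d - 4 * z + 3) - (RtoC r ^ d - 4 * RtoC r + 3) + 4 * (z - RtoC r))%C;
      [ring|].
    rewrite hgz, trinomial_RtoC, trinomial_root; ring. }
  pose proof trinomial_slope_at_root as hslope.
  destruct d as [|m]; [lia|].
  assert (hrr : Cmod (RtoC r) <= r) by (rewrite Cmod_R, Rabs_right; lra).
  pose proof (Cmod_pow_sub_le m z (RtoC r) r hzr hrr) as hlip.
  rewrite hdiff, Cmod_mult, Cmod_R, Rabs_right in hlip by lra.
  replace (S m - 1)%nat with m in hslope by lia.
  pose proof (Cmod_ge_0 (z - RtoC r)%C).
  apply Ceq_minus, Cmod_eq_0; nra.
Qed.

Lemma g_roots_in_unit_disk (z : Cx) : (Cnorm2 z < 1 /\ g d z = Cof 0) <-> z = Cof r.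
Proof.
  rewrite g_Coquelicot; split.
  - intros [hz hgz]; apply trinomial_disk_root_unique; [apply Cmod_lt_1_of_Cnorm2|]; assumption.
  - intros ->; split.
    + unfold Cnorm2, Cof; simpl; nra.
    + change (Cof r) with (RtoC r); rewrite trinomial_RtoC, trinomial_root; reflexivity.
Qed.

End TrinomialRoot.

Definition prob (P : list bool -> bool) (M : nat) : R :=
  fold_right Rplus 0 (map (fun l => if P l then weight l else 0) (all_seqs M)).

Lemma fold_Rplus_app (l1 l2 : list R) :
  fold_right Rplus 0 (l1 ++ l2) = fold_right Rplus 0 l1 + fold_right Rplus 0 l2.
Proof. induction l1 as [|x l1 IH]; simpl; [ring | rewrite IH; ring]. Qed.

Lemma fold_Rplus_map_scal {A} c (F : A -> R) (l : list A) :
  fold_right Rplus 0 (map (fun x => c * F x) l) = c * fold_right Rplus 0 (map F l).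
Proof. induction l as [|x l IH]; simpl; [ring | rewrite IH; ring]. Qed.

Lemma prob_0 P : prob P 0 = if P [] then 1 else 0.
Proof. unfold prob; simpl; destruct (P []); ring. Qed.

Lemma prob_S P M :
  prob P (S M) = 1/4 * prob (fun t => P (true :: t)) M + 3/4 * prob (fun t => P (false :: t)) M.
Proof.
  unfold prob; simpl all_seqs.
  rewrite map_app, fold_Rplus_app, !map_map, <- !fold_Rplus_map_scal.
  f_equal; f_equal; apply map_ext; intros l; simpl weight; destruct (P _); ring.
Qed.

Lemma prob_ext P Q M : (forall l, P l = Q l) -> prob P M = prob Q M.
Proof. intros hPQ; unfold prob; f_equal; apply map_ext; intros l; now rewrite hPQ. Qed.

Lemma prob_true M : prob (fun _ => true) M = 1.
Proof. induction M as [|M IH]; [apply prob_0 | rewrite prob_S, IH; lra]. Qed.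

Lemma prob_bounds P M : 0 <= prob P M <= 1.
Proof.
  revert P; induction M as [|M IH]; intros P.
  - rewrite prob_0; destruct (P []); lra.
  - rewrite prob_S; pose proof (IH (fun t => P (true :: t)));
      pose proof (IH (fun t => P (false :: t))); lra.
Qed.

Lemma prob_le_compat P Q M : (forall l, P l = true -> Q l = true) -> prob P M <= prob Q M.
Proof.
  revert P Q; induction M as [|M IH]; intros P Q hPQ.
  - rewrite !prob_0; destruct (P []) eqn:e; [rewrite (hPQ _ e) | destruct (Q [])]; lra.
  - rewrite !prob_S.
    pose proof (IH (fun t => P (true :: t)) (fun t => Q (true :: t)) (fun t => hPQ _)).
    pose proof (IH (fun t => P (false :: t)) (fun t => Q (false :: t)) (fun t => hPQ _)).
    lra.
Qed.

Fixpoint ruined (d a : nat) (l : list bool) : bool :=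
  match l with
  | [] => false
  | b :: t =>
      if b then ruined d (a + d - 1) t
      else match a with O => true | S a' => ruined d a' t end
  end.

Lemma partial_sum_cons b t N :
  partial_sum (b :: t) (S N) = ((if b then 1 else 0) + partial_sum t N)%nat.
Proof. unfold partial_sum; simpl firstn; destruct b; reflexivity. Qed.

Lemma existsb_ext {A} (f f' : A -> bool) l :
  (forall x, f x = f' x) -> existsb f l = existsb f' l.
Proof. intros hf; induction l as [|x l IH]; simpl; [reflexivity | now rewrite hf, IH]. Qed.

Lemma existsb_seq_S (f : nat -> bool) n :
  existsb f (seq 1 (S n)) = (f 1%nat || existsb (fun N => f (S N)) (seq 1 n))%bool.
Proof.
  simpl; f_equal; rewrite <- seq_shift.
  induction (seq 1 n) as [|x s IH]; simpl; [reflexivity | now rewrite IH].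
Qed.

Lemma ruined_spec d a l : (1 <= d)%nat ->
  ruined d a l = existsb (fun N => a + d * partial_sum l N <? N)%nat (seq 1 (length l)).
Proof.
  intros hd; revert a; induction l as [|b t IH]; intros a; [reflexivity|].
  cbn [length]; rewrite existsb_seq_S, (partial_sum_cons b t 0); cbn [ruined].
  destruct b; [|destruct a as [|a]].
  - rewrite IH, (proj2 (Nat.ltb_ge _ _)) by lia.
    apply existsb_ext; intros N; rewrite partial_sum_cons.
    apply Bool.eq_true_iff_eq; rewrite !Nat.ltb_lt; lia.
  - now rewrite Nat.mul_0_r.
  - rewrite IH, (proj2 (Nat.ltb_ge _ _)) by lia.
    apply existsb_ext; intros N; rewrite partial_sum_cons.
    apply Bool.eq_true_iff_eq; rewrite !Nat.ltb_lt; lia.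
Qed.

Lemma INR_lt_div_iff p N d : (0 < d)%nat -> INR p < INR N / INR d <-> (d * p < N)%nat.
Proof.
  intros hd; rewrite <- Rlt_div_r by (apply lt_0_INR; lia).
  rewrite <- mult_INR, Nat.mul_comm; split; [apply INR_lt | apply lt_INR].
Qed.

Lemma event_upto_ruined d l : (1 <= d)%nat -> event_upto d l = ruined d 0 l.
Proof.
  intros hd; rewrite ruined_spec by exact hd; unfold event_upto.
  apply existsb_ext; intros N.
  destruct (Rlt_dec _ _) as [h|h]; rewrite INR_lt_div_iff in h by lia; symmetry.
  - now apply Nat.ltb_lt.
  - apply Nat.ltb_ge; lia.
Qed.

Lemma ruined_anti d d' a a' l :
  (d <= d')%nat -> (a <= a')%nat -> ruined d' a' l = true -> ruined d a l = true.
Proof.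
  revert a a'; induction l as [|[|] t IH]; intros a a' hd ha; cbn [ruined]; [easy| |].
  - apply IH; lia.
  - destruct a as [|a]; [easy|]; destruct a' as [|a']; [lia|].
    apply IH; lia.
Qed.

Definition ruin_prob (d a M : nat) : R := prob (ruined d a) M.

Lemma P_upto_ruin_prob d M : (1 <= d)%nat -> P_upto d M = ruin_prob d 0 M.
Proof. intros hd; apply prob_ext; intros l; now apply event_upto_ruined. Qed.

Lemma ruin_prob_0 d a : ruin_prob d a 0 = 0.
Proof. apply prob_0. Qed.

Lemma ruin_prob_S d a M :
  ruin_prob d a (S M) =
  1/4 * ruin_prob d (a + d - 1) M + 3/4 * match a with O => 1 | S a' => ruin_prob d a' M end.
Proof.
  unfold ruin_prob; rewrite prob_S.
  destruct a; [rewrite <- (prob_true M)|]; reflexivity.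
Qed.

Lemma ruin_prob_bounds d a M : 0 <= ruin_prob d a M <= 1.
Proof. apply prob_bounds. Qed.

Lemma ruin_prob_le_S d a M : ruin_prob d a M <= ruin_prob d a (S M).
Proof.
  revert a; induction M as [|M IH]; intros a.
  - rewrite ruin_prob_0; apply ruin_prob_bounds.
  - rewrite (ruin_prob_S d a (S M)), (ruin_prob_S d a M).
    pose proof (IH (a + d - 1)%nat); destruct a as [|a]; [|pose proof (IH a)]; lra.
Qed.

Lemma ruin_prob_anti d d' a M : (d <= d')%nat -> ruin_prob d' a M <= ruin_prob d a M.
Proof. intros hd; apply prob_le_compat; intros l; apply ruined_anti; lia. Qed.

Section RuinBounds.

Variables (d : nat) (r : R).
Hypotheses (hd : (1 <= d)%nat) (hr : 0 <= r) (hroot : r ^ d + 3 = 4 * r).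

Lemma ruin_prob_le_root M a : ruin_prob d a M <= r ^ S a.
Proof.
  revert a; induction M as [|M IH]; intros a.
  - rewrite ruin_prob_0; apply pow_le, hr.
  - rewrite ruin_prob_S; pose proof (IH (a + d - 1)%nat) as hup.
    replace (S (a + d - 1)) with (a + d)%nat in hup by lia; rewrite pow_add in hup.
    destruct a as [|a]; simpl pow in *; [lra|].
    pose proof (IH a); nra.
Qed.

Lemma ruin_prob_ge_root rho phi :
  r <= rho -> 0 <= phi -> rho ^ d + 3 = 4 * rho * phi ->
  forall M a, r ^ S a - rho ^ S a * phi ^ M <= ruin_prob d a M.
Proof.
  intros hrho hphi hcontr M; induction M as [|M IH]; intros a.
  - rewrite ruin_prob_0; simpl (phi ^ 0).
    pose proof (pow_incr r rho (S a) (conj hr hrho)); lra.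
  - rewrite ruin_prob_S; pose proof (IH (a + d - 1)%nat) as hlow.
    replace (S (a + d - 1)) with (a + d)%nat in hlow by lia; rewrite !pow_add in hlow.
    pose proof (pow_le phi M hphi).
    destruct a as [|a]; simpl pow in *.
    + nra.
    + pose proof (IH a); nra.
Qed.

Lemma is_lim_ruin_prob_root rho :
  r <= rho -> rho ^ d + 3 < 4 * rho -> is_lim_seq (ruin_prob d 0) r.
Proof.
  intros hrho hneg.
  pose proof (pow_le rho d ltac:(lra)).
  set (phi := (rho ^ d + 3) / (4 * rho)).
  assert (hphi : 0 < phi < 1).
  { unfold phi; split; [apply Rdiv_lt_0_compat; lra|].
    apply Rlt_div_l; lra. }
  assert (hcontr : rho ^ d + 3 = 4 * rho * phi) by (unfold phi; field; lra).
  apply (is_lim_seq_le_le (fun M => r - rho * phi ^ M) _ (fun _ => r)).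
  - intros M; split.
    + pose proof (ruin_prob_ge_root rho phi hrho ltac:(lra) hcontr M 0); simpl pow in *; lra.
    + pose proof (ruin_prob_le_root M 0); simpl pow in *; lra.
  - replace (Finite r) with (Finite (r - rho * 0)) by (f_equal; ring).
    apply is_lim_seq_minus'; [apply is_lim_seq_const|].
    apply is_lim_seq_mult'; [apply is_lim_seq_const | apply is_lim_seq_geom].
    rewrite Rabs_right; lra.
  - apply is_lim_seq_const.
Qed.

End RuinBounds.

Lemma is_lim_ruin_prob_gt4 d r :
  (4 < d)%nat -> 0 < r < 1 -> geom_sum d r = 4 -> is_lim_seq (ruin_prob d 0) r.
Proof.
  intros hd hr hroot.
  pose proof (trinomial_root d r hroot) as hroot0.
  pose proof (trinomial_neg_above_root d r hd hr hroot ((r + 1) / 2) ltac:(lra)) as hneg.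
  unfold trinomial in hroot0, hneg.
  apply (is_lim_ruin_prob_root d r ltac:(lia) ltac:(lra) ltac:(lra) ((r + 1) / 2)); lra.
Qed.

Lemma INR_mul_bounded_nonpos c B : (forall n, INR n * c <= B) -> c <= 0.
Proof.
  intros hb; apply Rnot_lt_le; intros hc.
  destruct (INR_archimed c B hc) as [n hn]; specialize (hb n); lra.
Qed.

Lemma bounded_rec2_zero (D : nat -> R) B :
  (forall n, Rabs (D n) <= B) -> (forall n, D (S (S n)) + 2 * D (S n) + 3 * D n = 0) ->
  forall n, D n = 0.
Proof.
  intros hb hrec n.
  (* Q is positive definite and tripled at each step: the roots of x^2 + 2x + 3 have modulus
     sqrt 3. *)
  set (Q k := (D (S k) + D k) ^ 2 + 2 * D k ^ 2).
  assert (hQ : forall k, Q (S k) = 3 * Q k).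
  { intros k; unfold Q.
    replace (D (S (S k))) with (- 2 * D (S k) - 3 * D k) by (pose proof (hrec k); lra); ring. }
  assert (hQb : forall k, Q k <= 6 * B ^ 2).
  { intros k; unfold Q.
    pose proof (proj1 (Rabs_le_between _ _) (hb k));
      pose proof (proj1 (Rabs_le_between _ _) (hb (S k))); nra. }
  assert (hQn : forall k, INR k * Q n <= 6 * B ^ 2).
  { intros k; assert (hpow : Q (k + n)%nat = 3 ^ k * Q n).
    { induction k as [|k IH]; simpl; [ring | rewrite hQ, IH; ring]. }
    pose proof (Rle_pow_lin 2 k ltac:(lra)); replace (1 + 2) with 3 in * by ring.
    assert (0 <= Q n) by (unfold Q; nra).
    specialize (hQb (k + n)%nat); nra. }
  pose proof (INR_mul_bounded_nonpos _ _ hQn); unfold Q in *.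
  pose proof (pow2_ge_0 (D (S n) + D n)); pose proof (pow2_ge_0 (D n)).
  destruct (Req_dec (D n) 0) as [|hnz]; [assumption|].
  pose proof (pow_nonzero _ 2 hnz); lra.
Qed.

Lemma bounded_rec4_first_integral (G : nat -> R) B :
  (forall n, Rabs (G n) <= B) ->
  (forall n, G (S (S (S (S n)))) = 4 * G (S n) - 3 * G n) ->
  forall n, G (S (S (S n))) + G (S (S n)) + G (S n) - 3 * G n = 0.
Proof.
  intros hb hrec.
  (* x^4 - 4x + 3 = (x - 1) (x^3 + x^2 + x - 3): E is invariant, and W grows by E at each
     step. *)
  set (E n := G (S (S (S n))) + G (S (S n)) + G (S n) - 3 * G n).
  assert (hE : forall n, E n = E 0%nat).
  { induction n as [|n IH]; [reflexivity|]. rewrite <- IH; unfold E; rewrite hrec; ring. }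
  set (W n := 3 * G n + 2 * G (S n) + G (S (S n))).
  assert (hW : forall n, W n = W 0%nat + INR n * E 0%nat).
  { induction n as [|n IH]; [simpl; ring|].
    replace (W (S n)) with (W n + E n) by (unfold W, E; ring).
    rewrite IH, (hE n), S_INR; ring. }
  assert (hWb : forall n, W n <= 6 * B /\ - (6 * B) <= W n).
  { intros n; unfold W.
    pose proof (proj1 (Rabs_le_between _ _) (hb n));
      pose proof (proj1 (Rabs_le_between _ _) (hb (S n)));
      pose proof (proj1 (Rabs_le_between _ _) (hb (S (S n)))); lra. }
  assert (hup : E 0%nat <= 0).
  { apply (INR_mul_bounded_nonpos _ (12 * B)); intros n.
    pose proof (hWb n); pose proof (hWb 0%nat); pose proof (hW n); lra. }
  assert (hlow : - E 0%nat <= 0).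
  { apply (INR_mul_bounded_nonpos _ (12 * B)); intros n.
    pose proof (hWb n); pose proof (hWb 0%nat); pose proof (hW n); lra. }
  intros n; change (E n = 0); rewrite hE; lra.
Qed.

Lemma bounded_rec4_const (G : nat -> R) B :
  (forall n, Rabs (G n) <= B) ->
  (forall n, G (S (S (S (S n)))) = 4 * G (S n) - 3 * G n) ->
  forall n, G (S n) = G n.
Proof.
  intros hb hrec n.
  enough (G (S n) - G n = 0) by lra.
  apply (bounded_rec2_zero (fun k => G (S k) - G k) (2 * B)).
  - intros k; eapply Rle_trans; [apply Rabs_triang|]; rewrite Rabs_Ropp.
    pose proof (hb k); pose proof (hb (S k)); lra.
  - intros k; pose proof (bounded_rec4_first_integral G B hb hrec k); lra.
Qed.

Definition ruin_lim (d a : nat) : R := real (Lim_seq (ruin_prob d a)).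

Lemma is_lim_ruin_prob d a : is_lim_seq (ruin_prob d a) (ruin_lim d a).
Proof.
  apply Lim_seq_correct', (ex_finite_lim_seq_incr _ 1).
  - apply ruin_prob_le_S.
  - intros M; apply ruin_prob_bounds.
Qed.

Lemma ruin_lim_bounds d a : 0 <= ruin_lim d a <= 1.
Proof.
  split.
  - change (Rbar_le 0 (ruin_lim d a)).
    apply (is_lim_seq_le (fun _ => 0) (ruin_prob d a));
      [intros; apply ruin_prob_bounds | apply is_lim_seq_const | apply is_lim_ruin_prob].
  - change (Rbar_le (ruin_lim d a) 1).
    apply (is_lim_seq_le (ruin_prob d a) (fun _ => 1));
      [intros; apply ruin_prob_bounds | apply is_lim_ruin_prob | apply is_lim_seq_const].
Qed.

Lemma ruin_lim_rec d a :
  ruin_lim d a =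
  1/4 * ruin_lim d (a + d - 1) + 3/4 * match a with O => 1 | S a' => ruin_lim d a' end.
Proof.
  assert (hshift : is_lim_seq (fun M => ruin_prob d a (S M))
     (1/4 * ruin_lim d (a + d - 1) + 3/4 * match a with O => 1 | S a' => ruin_lim d a' end)).
  { apply (is_lim_seq_ext (fun M => 1/4 * ruin_prob d (a + d - 1) M
             + 3/4 * match a with O => 1 | S a' => ruin_prob d a' M end)).
    { intros M; symmetry; apply ruin_prob_S. }
    apply is_lim_seq_plus'; apply is_lim_seq_mult'; try apply is_lim_seq_const;
      [apply is_lim_ruin_prob | destruct a; [apply is_lim_seq_const | apply is_lim_ruin_prob]]. }
  apply (proj2 (is_lim_seq_incr_1 (ruin_prob d a) _)), is_lim_seq_unique in hshift.
  unfold ruin_lim at 1; now rewrite hshift.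
Qed.

Lemma ruin_lim_4 : ruin_lim 4 0 = 1.
Proof.
  set (G n := match n with O => 0 | S a => 1 - ruin_lim 4 a end).
  enough (G 1%nat = G 0%nat) by (simpl in *; lra).
  apply (bounded_rec4_const G 1).
  - intros [|a]; simpl; [rewrite Rabs_R0; lra|].
    pose proof (ruin_lim_bounds 4 a); rewrite Rabs_right; lra.
  - intros [|a]; simpl G.
    + pose proof (ruin_lim_rec 4 0); simpl in *; lra.
    + pose proof (ruin_lim_rec 4 (S a)) as hrec.
      replace (S a + 4 - 1)%nat with (S (S (S (S a)))) in hrec by lia; lra.
Qed.

Lemma is_lim_ruin_prob_le4 d : (1 <= d <= 4)%nat -> is_lim_seq (ruin_prob d 0) 1.
Proof.
  intros hd.
  apply (is_lim_seq_le_le (ruin_prob 4 0) _ (fun _ => 1)).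
  - intros M; split; [apply ruin_prob_anti; lia | apply ruin_prob_bounds].
  - rewrite <- ruin_lim_4; apply is_lim_ruin_prob.
  - apply is_lim_seq_const.
Qed.

Lemma P_d_is_of_ruin_prob d (p : R) : (1 <= d)%nat -> is_lim_seq (ruin_prob d 0) p -> P_d_is d p.
Proof.
  intros hd hlim; apply is_lim_seq_Reals.
  apply (is_lim_seq_ext (ruin_prob d 0)); [|exact hlim].
  intros M; symmetry; now apply P_upto_ruin_prob.
Qed.

Theorem mainTheorem11 (d : nat) (hd : (1 <= d)%nat) :
  ((d <= 4)%nat -> P_d_is d 1) /\
  ((4 < d)%nat ->
     exists r : R,
       (forall z : Cx, (Cnorm2 z < 1 /\ g d z = Cof 0) <-> z = Cof r) /\
       3/4 < r < 1 /\
       P_d_is d r).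
Proof.
  split.
  - intros hd4; apply P_d_is_of_ruin_prob; [exact hd|].
    apply is_lim_ruin_prob_le4; lia.
  - intros hd4; destruct (geom_sum_root_exists d hd4) as [r [hr hroot]].
    exists r; split; [|split].
    + exact (g_roots_in_unit_disk d r hd4 hr hroot).
    + split; [exact (trinomial_root_gt_3_4 d r hr hroot) | apply hr].
    + apply P_d_is_of_ruin_prob; [exact hd|].
      exact (is_lim_ruin_prob_gt4 d r hd4 hr hroot).
Qed.
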